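(* Let $\mathbf b=b_0b_1b_2\cdots\in\{1,-1\}^{\mathbb N}$ be fixed and let $m\ge1$. Let $s_1,s_2\ge 0$ and $d_1,d_2\ge1$ be integers such that $s_2$ and $d_2$ are even. Let $r$ be such that $2^r> s_1+m d_1$, and suppose that for each $i\ge 0$ the following implication holds: if $\mathcal E_{i,1}(s_2,d_2,m)\neq \mathcal E_{i,-1}(s_2,d_2,m)$, then $b_i=b_{i+r}$. Then \[\Delta(s_1,d_1,m)+\Delta(s_2,d_2,m)=\Delta(s_1+2^r s_2,\; d_1+2^r d_2,\; m).\]
   Context: For integers $a$ and $N\ge1$, $(a \bmod N)$ denotes the unique integer in $\{0,\dots,N-1\}$ congruent to $a$ modulo $N$; we write $a\succ c \pmod N$ iff $(a\bmod N)>(c\bmod N)$. For $b\in\{-1,1\}$, $k\ge0$ and integers $0\le\ell\le n$, let $\varepsilon_{k,b}(\ell,n)=1$ if $n-\ell \succ (2+b)\cdot 2^k-(\ell+1) \pmod{2^{k+2}}$ and $\varepsilon_{k,b}(\ell,n)=0$ otherwise. (Equivalently, $\varepsilon_{k,b}(\ell,n)=D_{k,b}(\ell,n)-\lfloor (n-\ell)/2^{k+2}\rfloor$, where $D_{k,b}(\ell,n)$ is the number of integers $i\in(\ell,n]$ with $i\equiv (2+b)2^k \pmod{2^{k+2}}$.) For integers $s\ge0$, $d\ge1$, $m\ge1$ define the vector \[\mathcal E_{k,b}(s,d,m)=\big(\varepsilon_{k,b}(s,s+d),\varepsilon_{k,b}(s+d,s+2d),\dots,\varepsilon_{k,b}(s+(m-1)d,s+md)\big)\]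 and, for the fixed sequence $\mathbf b$, $\Delta(s,d,m)=\sum_{k=0}^{\infty}\mathcal E_{k,b_k}(s,d,m)$ (only finitely many summands are nonzero). *)

From mathcomp Require Import all_boot all_order all_algebra.
From mathcomp Require Import zify.
Set Implicit Arguments. Unset Strict Implicit. Unset Printing Implicit Defensive.
Import Order.TTheory GRing.Theory Num.Theory.

Definition succ_mod (a c : int) (N : nat) : bool :=
  ((c %% N%:Z)%Z < (a %% N%:Z)%Z)%R.

Definition eps (k : nat) (b : int) (l n : nat) : nat :=
  succ_mod (n%:Z - l%:Z)%R ((2%:Z + b) * (2 ^ k)%:Z - (l%:Z + 1))%R (2 ^ k.+2).

Definition Evec (k : nat) (b : int) (s d m : nat) : seq nat :=
  [seq eps k b (s + j * d) (s + j.+1 * d) | j <- iota 0 m].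

(* Component of Delta: sum_{k>=0} eps_{k,b_k}(l,n).  All terms with k >= n
   vanish when l <= n (since 2^k > n), see [eps_large] below, so the
   infinite sum equals the finite sum over k < n.+1. *)
Definition Dcomp (bs : nat -> int) (l n : nat) : nat :=
  \sum_(k < n.+1) eps k (bs k) l n.

Definition Delta (bs : nat -> int) (s d m : nat) : seq nat :=
  [seq Dcomp bs (s + j * d) (s + j.+1 * d) | j <- iota 0 m].

Definition vadd (u v : seq nat) : seq nat := [seq p.1 + p.2 | p <- zip u v].

Lemma eps_large k b l n : (b = 1 \/ b = -1)%R -> l <= n -> n < 2 ^ k -> eps k b l n = 0.
Proof.
move=> hb hln hk; rewrite /eps /succ_mod.
have e4 : 2 ^ k.+2 = 4 * 2 ^ k by rewrite !expnS mulnA.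
rewrite e4.
have -> : ((n%:Z - l%:Z) %% (4 * 2 ^ k)%:Z)%Z = (n%:Z - l%:Z)%R.
  by apply/modz_small; lia.
case: hb => ->.
- have -> : (((2%:Z + 1) * (2 ^ k)%:Z - (l%:Z + 1)) %% (4 * 2 ^ k)%:Z)%Z
     = ((2%:Z + 1) * (2 ^ k)%:Z - (l%:Z + 1))%R.
    by apply/modz_small; lia.
  by case: ltP => //; lia.
- have -> : (((2%:Z + -1) * (2 ^ k)%:Z - (l%:Z + 1)) %% (4 * 2 ^ k)%:Z)%Z
     = ((2%:Z + -1) * (2 ^ k)%:Z - (l%:Z + 1))%R.
    by apply/modz_small; lia.
  by case: ltP => //; lia.
Qed.

Lemma eps_tail k b l n : (b = 1 \/ b = -1)%R -> l <= n -> n < k -> eps k b l n = 0.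
Proof. move=> hb hl hk; apply: eps_large => //; apply: leq_trans (ltn_expl _ (isT : 1 < 2)); exact: ltnW. Qed.

(* [eps k b l n] only depends on [l] and [n] modulo [2^(k+2)].  For [k < r] the
   summand [2^r * l2] (resp. [2^r * n2]) with [l2], [n2] even is a multiple of
   [2^(k+2)], so the low terms of [Delta] at the combined progression are those
   of [(s1, d1)].  For [k = k' + r], the base-[2^r] digits [l1 <= n1 < 2^r] never
   change the comparison defining [eps], so the high terms are those of
   [(s2, d2)] with [b] shifted by [r]; the hypothesis on [b] says exactly that
   this shift is harmless. *)

From mathcomp Require Import all_boot all_order all_algebra zify ring.
Import Order.TTheory GRing.Theory Num.Theory.

Set Implicit Arguments.
Unset Strict Implicit.
Unset Printing Implicit Defensive.

Local Open Scope ring_scope.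

Lemma modz_mulD_small (y z : int) (P M : nat) : (0 < P)%N -> (0 < M)%N ->
  0 <= z < P%:Z -> ((y * P%:Z + z) %% (M * P)%:Z)%Z = (y %% M%:Z)%Z * P%:Z + z.
Proof.
move=> P_gt0 M_gt0 z_digit.
have ge0_ymodM : 0 <= (y %% M%:Z)%Z by apply: modz_ge0; lia.
have lt_ymodM : (y %% M%:Z)%Z < M%:Z by apply: ltz_pmod; lia.
rewrite {1}(divz_eq y M%:Z); move: ge0_ymodM lt_ymodM.
set q := (y %/ M%:Z)%Z; set r := (y %% M%:Z)%Z => ge0_r lt_r.
have -> : (q * M%:Z + r) * P%:Z + z = q * (M * P)%:Z + (r * P%:Z + z).
  by rewrite PoszM; ring.
by rewrite modzMDl modz_small //; nia.
Qed.

Lemma lt_mulD_digits (A B z w : int) (P : nat) :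
  0 <= w <= z -> z < P%:Z -> (A * P%:Z + z < B * P%:Z + w) = (A < B).
Proof. by move=> w_le_z z_lt; apply/idP/idP => ?; nia. Qed.

Lemma succ_modMDl a c t u N :
  succ_mod (t * N%:Z + a) (u * N%:Z + c) N = succ_mod a c N.
Proof. by rewrite /succ_mod !modzMDl. Qed.

Lemma eps_mulDl k b l n p q :
  eps k b (l + p * 2 ^ k.+2) (n + q * 2 ^ k.+2) = eps k b l n.
Proof.
rewrite /eps; set X := (2 ^ k.+2)%N.
have -> : (n + q * X)%N%:Z - (l + p * X)%N%:Z
        = (q%:Z - p%:Z) * X%:Z + (n%:Z - l%:Z).
  by rewrite !PoszD !PoszM; ring.
have -> : (2%:Z + b) * (2 ^ k)%N%:Z - ((l + p * X)%N%:Z + 1)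
        = - p%:Z * X%:Z + ((2%:Z + b) * (2 ^ k)%N%:Z - (l%:Z + 1)).
  by rewrite !PoszD !PoszM; ring.
by rewrite succ_modMDl.
Qed.

Lemma eps_low k r b l1 n1 l2 n2 : (k < r)%N -> ~~ odd l2 -> ~~ odd n2 ->
  eps k b (l1 + 2 ^ r * l2) (n1 + 2 ^ r * n2) = eps k b l1 n1.
Proof.
move=> lt_kr /negbTE even_l2 /negbTE even_n2.
have r_split : r = (k.+1 + (r - k.+1))%N by rewrite subnKC.
have mul2r_even x : odd x = false -> (2 ^ r * x = 2 ^ (r - k.+1) * x./2 * 2 ^ k.+2)%N.
  move=> even_x; rewrite {1}r_split expnD !expnS -{1}(odd_double_half x) even_x.
  by rewrite add0n -muln2; ring.
by rewrite !mul2r_even // eps_mulDl.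
Qed.

Lemma eps_high k r b l1 n1 l2 n2 : (l1 <= n1)%N -> (n1 < 2 ^ r)%N ->
  eps (k + r) b (l1 + 2 ^ r * l2) (n1 + 2 ^ r * n2) = eps k b l2 n2.
Proof.
move=> le_l1n1 lt_n1.
rewrite /eps /succ_mod (_ : 2 ^ (k + r).+2 = 2 ^ k.+2 * 2 ^ r)%N; last by rewrite -expnD addSn.
set P := (2 ^ r)%N; set M := (2 ^ k.+2)%N.
have P_gt0 : (0 < P)%N by rewrite expn_gt0.
have M_gt0 : (0 < M)%N by rewrite expn_gt0.
have -> : (n1 + P * n2)%N%:Z - (l1 + P * l2)%N%:Z
        = (n2%:Z - l2%:Z) * P%:Z + (n1%:Z - l1%:Z).
  by rewrite !PoszD !PoszM; ring.
have -> : (2%:Z + b) * (2 ^ (k + r))%N%:Z - ((l1 + P * l2)%N%:Z + 1)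
        = ((2%:Z + b) * (2 ^ k)%N%:Z - (l2%:Z + 1)) * P%:Z + (P%:Z - l1%:Z - 1).
  by rewrite expnD !PoszD !PoszM; ring.
rewrite !modz_mulD_small //; try lia.
by rewrite lt_mulD_digits //; lia.
Qed.

Local Open Scope nat_scope.

Section SignSequence.

Variable bs : nat -> int.
Hypothesis bs_sign : forall k, bs k = 1%R \/ bs k = (-1)%R.

Lemma sum_eps_widen l n K K' : l <= n -> n < 2 ^ K -> K <= K' ->
  \sum_(k < K) eps k (bs k) l n = \sum_(k < K') eps k (bs k) l n.
Proof.
move=> le_ln lt_n le_KK'.
rewrite (big_ord_widen K' (fun k => eps k (bs k) l n) le_KK') big_mkcond.
apply: eq_bigr => k _; case: ifP => // /negbT; rewrite -leqNgt => le_Kk.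
by rewrite eps_large //; apply: leq_trans lt_n _; rewrite leq_pexp2l.
Qed.

Lemma Dcomp_sum l n K : l <= n -> n < 2 ^ K ->
  Dcomp bs l n = \sum_(k < K) eps k (bs k) l n.
Proof.
move=> le_ln lt_n; rewrite /Dcomp.
have lt_n' : n < 2 ^ n.+1 by apply: ltn_trans (ltn_expl _ (isT : 1 < 2)) _; rewrite ltn_exp2l.
rewrite (sum_eps_widen le_ln lt_n' (leq_maxr K n.+1)).
by rewrite (sum_eps_widen le_ln lt_n (leq_maxl K n.+1)).
Qed.

Lemma DcompD l1 n1 l2 n2 r :
  (forall k, eps k (bs (k + r)) l2 n2 = eps k (bs k) l2 n2) ->
  l1 <= n1 -> n1 < 2 ^ r -> l2 <= n2 -> ~~ odd l2 -> ~~ odd n2 ->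
  Dcomp bs l1 n1 + Dcomp bs l2 n2 = Dcomp bs (l1 + 2 ^ r * l2) (n1 + 2 ^ r * n2).
Proof.
move=> shift_eps le_l1n1 lt_n1 le_l2n2 even_l2 even_n2.
set K := (n1 + 2 ^ r * n2).+1.
have lt_K : n1 + 2 ^ r * n2 < 2 ^ K by apply: ltn_trans (ltnSn _) (ltn_expl _ (isT : 1 < 2)).
have le_combined : l1 + 2 ^ r * l2 <= n1 + 2 ^ r * n2 by apply: leq_add => //; exact: leq_mul.
have lt_rK : n1 + 2 ^ r * n2 < 2 ^ (r + K).
  by apply: leq_trans lt_K _; rewrite leq_pexp2l // leq_addl.
have lt_n2 : n2 < 2 ^ K.
  apply: leq_ltn_trans lt_K; apply: leq_trans (leq_addl n1 _).
  by rewrite leq_pmull // expn_gt0.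
rewrite (Dcomp_sum le_combined lt_rK) big_split_ord /=.
rewrite (Dcomp_sum le_l1n1 lt_n1) (Dcomp_sum le_l2n2 lt_n2).
congr (_ + _); apply: eq_bigr => k _ /=.
- by rewrite eps_low.
- by rewrite addnC eps_high // shift_eps.
Qed.

Lemma nth_Evec k b s d m j : j < m ->
  nth 0 (Evec k b s d m) j = eps k b (s + j * d) (s + j.+1 * d).
Proof. by move=> lt_jm; rewrite (nth_map 0) ?size_iota // nth_iota. Qed.

Lemma eps_Evec_shift m s d r j : j < m ->
  (forall i, Evec i 1%R s d m != Evec i (-1)%R s d m -> bs i = bs (i + r)) ->
  forall k, eps k (bs (k + r)) (s + j * d) (s + j.+1 * d)
          = eps k (bs k) (s + j * d) (s + j.+1 * d).
Proof.
move=> lt_jm shift_bs k.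
have [/shift_bs <- // | /negbNE/eqP Evec_pm] :=
  boolP (Evec k 1%R s d m != Evec k (-1)%R s d m).
have := congr1 (nth 0 ^~ j) Evec_pm; rewrite !nth_Evec // => eps_pm.
by case: (bs_sign k) => ->; case: (bs_sign (k + r)) => ->.
Qed.

End SignSequence.

Theorem lemma4p1 (bs : nat -> int) (m s1 s2 d1 d2 r : nat) :
  (forall k, bs k = 1%R \/ bs k = (-1)%R) ->
  1 <= m -> 1 <= d1 -> 1 <= d2 ->
  ~~ odd s2 -> ~~ odd d2 ->
  s1 + m * d1 < 2 ^ r ->
  (forall i, Evec i 1%R s2 d2 m != Evec i (-1)%R s2 d2 m -> bs i = bs (i + r)) ->
  vadd (Delta bs s1 d1 m) (Delta bs s2 d2 m)
  = Delta bs (s1 + 2 ^ r * s2) (d1 + 2 ^ r * d2) m.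
Proof.
move=> bs_sign _ _ _ even_s2 even_d2 lt_r shift_bs.
rewrite /vadd /Delta zip_map -map_comp.
apply/eq_in_map => j; rewrite mem_iota add0n => /andP[_ lt_jm] /=.
have combine i : (s1 + 2 ^ r * s2 + i * (d1 + 2 ^ r * d2)
                  = (s1 + i * d1) + 2 ^ r * (s2 + i * d2))%N.
  by move: (2 ^ r)%N => P; nia.
have even_term i : ~~ odd (s2 + i * d2) by rewrite oddD oddM (negbTE even_s2) (negbTE even_d2) andbF.
have le_succ s d : (s + j * d <= s + j.+1 * d)%N by rewrite leq_add2l leq_mul2r leqnSn orbT.
rewrite !combine; apply: DcompD => //.
- exact: (@eps_Evec_shift bs bs_sign m s2 d2 r j lt_jm shift_bs).
- by apply: leq_ltn_trans lt_r; rewrite leq_add2l leq_mul2r lt_jm orbT.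
Qed.
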